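(* Let $\mathbb{F}$ be a field with $\operatorname{char}\mathbb{F}\neq 2$, let $V$ be a finite-dimensional $\mathbb{F}$-vector space of odd dimension $n$, and let $Q:V\to\mathbb{F}$ be a non-degenerate quadratic form with polarization $b$. Let $G\leq O(V,Q)$ be a finite solvable subgroup that acts irreducibly on $V$. Then there exists an orthogonal decomposition $V=W_1\perp\cdots\perp W_n$ (orthogonal with respect to $b$) such that $\dim W_i=1$ for all $1\leq i\leq n$ and $G$ permutes the set $\{W_1,\ldots,W_n\}$.
   Context: $O(V,Q)=\{g\in\operatorname{GL}(V): Q(gv)=Q(v)\text{ for all }v\in V\}$ is the isometry group of $Q$. ''Irreducible'' means $V$ has no $G$-invariant subspaces other than $0$ and $V$. *)

From HB Require Import structures.
From mathcomp Require Import all_boot all_order all_algebra all_fingroup all_solvable.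
From mathcomp Require Import mxrepresentation.
Set Implicit Arguments. Unset Strict Implicit. Unset Printing Implicit Defensive.
Import GRing.Theory.
Local Open Scope ring_scope.

Definition polar (F : fieldType) (n : nat) (Q : 'rV[F]_n -> F) (u v : 'rV[F]_n) : F :=
  Q (u + v) - Q u - Q v.

Definition is_quadform (F : fieldType) (n : nat) (Q : 'rV[F]_n -> F) : Prop :=
  (forall (a : F) v, Q (a *: v) = a ^+ 2 * Q v) /\
  (forall u v w, polar Q (u + v) w = polar Q u w + polar Q v w) /\
  (forall (a : F) u v, polar Q (a *: u) v = a * polar Q u v).

Definition qf_nondegenerate (F : fieldType) (n : nat) (Q : 'rV[F]_n -> F) : Prop :=
  forall u, (forall v, polar Q u v = 0) -> u = 0.

From HB Require Import structures.
From mathcomp Require Import all_boot all_order all_algebra all_fingroup all_solvable.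
From mathcomp Require Import mxrepresentation.
From mathcomp Require Import zify.
From Stdlib Require Import Classical.
Set Implicit Arguments. Unset Strict Implicit. Unset Printing Implicit Defensive.
Import GRing.Theory.
Local Open Scope ring_scope.

(* If every element of G acts by +-1, irreducibility
   forces n = 1.  Otherwise let M be the last term of the derived series of G
   that does not act by +-1.  Commutators of M act by +-1, and -1 is impossible
   in odd dimension (determinants), so M acts abelianly.  By Clifford theory V
   is the sum of the t homogeneous M-components, permuted transitively by G;
   they all have the same rank r, so t is odd.  Each component W is
   non-orthogonal to exactly one component s(W), since perp W, of rank n - r,
   is the sum of the components it contains.  Now s is an involution commuting
   with G, so it has a fixed point and then s = id: the components are
   nondegenerate and pairwise orthogonal.  If t > 1, induction applied to the
   stabiliser of a component, translated by coset representatives, gives the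
   frame.  If t = 1 and a is in M, the skew-adjoint rho(a) - rho(a)^-1 is
   singular in odd dimension; a singular element of the enveloping algebra of
   M commuting with M kills a simple submodule, hence the whole homogeneous
   module.  So rho(a)^2 = 1 and then rho(a) = +-1, contradicting the choice
   of M. *)

Lemma classically_elim (P : Prop) : classically P -> P.
Proof. by move/classicP => nnP; apply: NNPP. Qed.

Lemma involutive_fixpoint (T : finType) (s : T -> T) :
  involutive s -> odd #|T| -> exists x, s x = x.
Proof.
move=> sK oddT; case: (pickP (fun x => s x == x)) => [x /eqP | nofix].
  by exists x.
pose A := [set x : T | enum_rank x < enum_rank (s x)]%N.
have defT : [set: T] = A :|: s @: A.
  apply/setP => x; rewrite in_setT in_setU; symmetry; apply/orP.
  case: (ltngtP (enum_rank x) (enum_rank (s x))) => [lt | gt | /val_inj/enum_rank_inj e].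
  - by left; rewrite inE.
  - by right; apply/imsetP; exists (s x); rewrite ?inE sK.
  - by have := nofix x; rewrite -e eqxx.
have disjA : A :&: s @: A = set0.
  apply/setP => x; rewrite !inE; apply/negP => /andP[xA /imsetP[y yA ey]].
  by move: xA yA; rewrite !inE ey sK => /ltn_trans lt /lt; rewrite ltnn.
have := cardsUI A (s @: A); rewrite -defT disjA cards0 addn0 cardsT.
rewrite card_imset; last exact: inv_inj sK.
by move=> eT; move: oddT; rewrite eT addnn odd_double.
Qed.

Lemma eq_bilinear_mx (F : fieldType) n (A C : 'M[F]_n) :
  (forall u v : 'rV_n, (u *m A *m v^T) 0 0 = (u *m C *m v^T) 0 0) -> A = C.
Proof.
move=> eAC; apply/matrixP => i j; have := eAC (delta_mx 0 i) (delta_mx 0 j).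
by rewrite -!rowE trmx_delta -!colE !mxE.
Qed.

Lemma conj_neq_opp (F : fieldType) n (X Y : 'M[F]_n) :
  (2%:R : F) != 0 -> odd n -> X \in unitmx -> Y \in unitmx ->
  invmx Y *m X *m Y != - X.
Proof.
move=> two oddn uX uY; apply/eqP => /(congr1 determinant).
rewrite -scaleN1r detZ -signr_odd oddn expr1 !det_mulmx det_inv mulrAC.
rewrite mulVf -?unitfE -?unitmxE // mul1r => /eqP; rewrite -subr_eq0 mulN1r opprK.
rewrite -mulr2n -mulr_natr mulf_eq0 (negPf two) orbF.
by move: uX; rewrite unitmxE unitfE => /negPf ->.
Qed.

Section QuadraticForm.
Variables (F : fieldType) (n : nat) (Q : 'rV[F]_n -> F).
Hypothesis qfQ : is_quadform Q.
Local Notation b := (polar Q).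

Definition qf_isometry (X : 'M[F]_n) := forall v, Q (v *m X) = Q v.

Lemma polarC u v : b u v = b v u.
Proof. by rewrite /polar [u + v]addrC -!addrA [- Q u + _]addrC. Qed.

Lemma polarDl u v w : b (u + v) w = b u w + b v w.
Proof. by case: qfQ => _ []. Qed.

Lemma polarZl a u v : b (a *: u) v = a * b u v.
Proof. by case: qfQ => _ []. Qed.

Lemma polarZr a u v : b v (a *: u) = a * b v u.
Proof. by rewrite !(polarC v) polarZl. Qed.

Lemma polar0l v : b 0 v = 0.
Proof. by rewrite -(scale0r 0) polarZl mul0r. Qed.

Lemma polarBl u w v : b (u - w) v = b u v - b w v.
Proof. by rewrite polarDl -scaleN1r polarZl mulN1r. Qed.

Lemma polarBr u w v : b v (u - w) = b v u - b v w.
Proof. by rewrite !(polarC v) polarBl. Qed.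

Lemma polar_suml m (f : 'I_m -> 'rV_n) v : b (\sum_i f i) v = \sum_i b (f i) v.
Proof.
by apply: (big_morph (fun u => b u v)) => [x y|]; rewrite ?polarDl ?polar0l.
Qed.

Lemma polar_sumr m (f : 'I_m -> 'rV_n) v : b v (\sum_i f i) = \sum_i b v (f i).
Proof. by rewrite polarC polar_suml; apply: eq_bigr => i _; rewrite polarC. Qed.

Definition gram : 'M[F]_n := \matrix_(i, j) b (delta_mx 0 i) (delta_mx 0 j).

Lemma polar_gram u v : b u v = (u *m gram *m v^T) 0 0.
Proof.
rewrite {1}(row_sum_delta u) {1}(row_sum_delta v) polar_suml !mxE.
rewrite [RHS](eq_bigr (fun j => \sum_i u 0 i * gram i j * v 0 j)); last first.
  by move=> j _; rewrite !mxE mulr_suml.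
rewrite exchange_big /=; apply: eq_bigr => i _.
rewrite polarZl polar_sumr mulr_sumr; apply: eq_bigr => j _.
by rewrite polarZr !mxE mulrA mulrAC.
Qed.

Section Isometry.
Variable X : 'M[F]_n.
Hypothesis isoX : qf_isometry X.

Lemma polar_isometry u v : b (u *m X) (v *m X) = b u v.
Proof. by rewrite /polar -mulmxDl !isoX. Qed.

Lemma gram_isometry : X *m gram *m X^T = gram.
Proof.
apply: eq_bilinear_mx => u v.
by rewrite -polar_gram -polar_isometry polar_gram !mulmxA trmx_mul !mulmxA.
Qed.

Lemma isometry_skew : X \in unitmx ->
  forall u v, b (u *m (X - invmx X)) v = - b u (v *m (X - invmx X)).
Proof.
move=> uX u v; rewrite !mulmxBr polarBl polarBr [in RHS]opprB.
by rewrite -{1}[v](mulmxKV uX) polar_isometry -(polar_isometry (u *m invmx X)) mulmxKV.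
Qed.

End Isometry.

Definition qf_restrict m (B : 'M_(m, n)) (x : 'rV_m) := Q (x *m B).

Lemma polar_restrict m (B : 'M_(m, n)) x y :
  polar (qf_restrict B) x y = b (x *m B) (y *m B).
Proof. by rewrite /polar /qf_restrict mulmxDl. Qed.

Lemma qf_restrictP m (B : 'M_(m, n)) : is_quadform (qf_restrict B).
Proof.
case: qfQ => QZ _; split; [|split] => [a x | x y z | a x y].
- by rewrite /qf_restrict -scalemxAl QZ.
- by rewrite !polar_restrict mulmxDl polarDl.
- by rewrite !polar_restrict -scalemxAl polarZl.
Qed.

Hypothesis ndQ : qf_nondegenerate Q.

Lemma gram_unit : gram \in unitmx.
Proof.
rewrite -row_free_unit -kermx_eq0; apply/negPn/negP => nzK.
have uK : nz_row (kermx gram) *m gram = 0 by apply/sub_kermxP; apply: nz_row_sub.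
move: nzK; rewrite -nz_row_eq0 (ndQ (u := nz_row (kermx gram))) ?eqxx // => v.
by rewrite polar_gram uK mul0mx mxE.
Qed.

Lemma polar_inj u w : (forall v, b u v = b w v) -> u = w.
Proof.
move=> buw; apply/eqP; rewrite -subr_eq0; apply/eqP; apply: ndQ => v.
by rewrite polarBl buw subrr.
Qed.

Lemma eq_polar_mx (A C : 'M_n) :
  (forall u v, b (u *m A) v = b (u *m C) v) -> A = C.
Proof.
by move=> bAC; apply/row_matrixP => i; rewrite !rowE; apply: polar_inj; apply: bAC.
Qed.

Definition adj (A : 'M_n) := gram *m A^T *m invmx gram.

Lemma adjP A u v : b (u *m adj A) v = b u (v *m A).
Proof.
by rewrite !polar_gram /adj !mulmxA (mulmxKV gram_unit) trmx_mul !mulmxA.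
Qed.

Lemma adj_comm_isometry A X : qf_isometry X -> X \in unitmx ->
  A *m X = X *m A -> adj A *m X = X *m adj A.
Proof.
move=> isoX uX cAX; have cAXV : invmx X *m A = A *m invmx X.
  by rewrite -[LHS](mulmxK uX) -(mulmxA _ A) cAX mulKmx.
apply: eq_polar_mx => u v; rewrite (mulmxA u (adj A)) (mulmxA u X).
rewrite -{1}[v](mulmxKV uX) polar_isometry //.
by rewrite adjP -(mulmxA v) cAXV mulmxA -(polar_isometry isoX u) mulmxKV // adjP.
Qed.

Definition perp m (U : 'M_(m, n)) : 'M_n := kermx (gram *m U^T).

Lemma perpP m (U : 'M_(m, n)) (v : 'rV_n) :
  reflect (forall u : 'rV_n, (u <= U)%MS -> b v u = 0) (v <= perp U)%MS.
Proof.
apply: (iffP sub_kermxP) => [vU u /submxP[D ->] | vU].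
  by rewrite polar_gram trmx_mul !mulmxA -(mulmxA v gram) vU !mul0mx mxE.
apply/matrixP => k i; rewrite (_ : (v *m _) k i = b v (row i U)).
  by rewrite vU ?row_sub // mxE.
by rewrite ord1 polar_gram tr_row colE !mulmxA -colE /col mxE.
Qed.

Lemma sub_perp m1 m2 (U : 'M_(m1, n)) (V : 'M_(m2, n)) :
  (V <= perp U)%MS = (V *m gram *m U^T == 0).
Proof. by rewrite sub_kermx mulmxA. Qed.

Lemma sub_perpC m1 m2 (U : 'M_(m1, n)) (V : 'M_(m2, n)) :
  (V <= perp U)%MS = (U <= perp V)%MS.
Proof.
apply/rV_subP/rV_subP => sUV v vX; apply/perpP => u uY; rewrite polarC;
  by move/perpP: (sUV u uY); apply.
Qed.

Lemma perpS m1 m2 (U : 'M_(m1, n)) (V : 'M_(m2, n)) :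
  (U <= V)%MS -> (perp V <= perp U)%MS.
Proof. by move=> sUV; rewrite sub_perpC (submx_trans sUV) // sub_perpC. Qed.

Lemma eqmx_perp m1 m2 (U : 'M_(m1, n)) (U' : 'M_(m2, n)) :
  (U :=: U')%MS -> (perp U :=: perp U')%MS.
Proof. by move=> eU; apply/eqmxP/andP; split; apply: perpS; rewrite eU. Qed.

Lemma perp_isometry X : qf_isometry X -> forall m1 m2 (A : 'M_(m1, n)) (B : 'M_(m2, n)),
  (A *m X <= perp (B *m X))%MS = (A <= perp B)%MS.
Proof.
move=> isoX m1 m2 A B; rewrite !sub_perp trmx_mul !mulmxA -(mulmxA A X gram).
by rewrite -(mulmxA A (X *m gram)) gram_isometry.
Qed.

Lemma sub_perp_adj m1 m2 (A : 'M_(m1, n)) (B : 'M_(m2, n)) f :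
  (A <= perp (B *m f))%MS = (A *m adj f <= perp B)%MS.
Proof. by rewrite !sub_perp /adj trmx_mul !mulmxA (mulmxKV gram_unit). Qed.

Lemma mxrank_perp m (U : 'M_(m, n)) : \rank (perp U) = (n - \rank U)%N.
Proof.
rewrite mxrank_ker -mxrank_tr trmx_mul trmxK mxrankMfree //.
by rewrite row_free_unit unitmx_tr gram_unit.
Qed.

Lemma sub1_perp m (U : 'M_(m, n)) : (1%:M <= perp U)%MS -> U = 0.
Proof.
move=> sU; apply/eqP; rewrite -submx0; apply/rV_subP => v vU.
rewrite submx0; apply/eqP; apply: ndQ => w; rewrite polarC.
by apply/perpP: v vU; apply: submx_trans (submx1 _) sU.
Qed.

Lemma qf_restrict_nondegenerate m (B : 'M_(m, n)) :
  row_free B -> (1%:M <= B + perp B)%MS -> qf_nondegenerate (qf_restrict B).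
Proof.
move=> freeB fullB x bx; apply: (row_free_inj freeB); rewrite mul0mx.
have xBB : (x *m B <= perp B)%MS.
  by apply/perpP => _ /submxP[y ->]; rewrite -polar_restrict bx.
apply: sub1_perp; rewrite -sub_perpC; apply: submx_trans (perpS fullB).
by rewrite sub_perpC addsmx_sub -sub_perpC xBB perpS ?submxMl.
Qed.

Hypotheses (two : (2%:R : F) != 0) (oddn : odd n).

Lemma skew_singular D :
  (forall u v, b (u *m D) v = - b u (v *m D)) -> D \notin unitmx.
Proof.
move=> skD; have eD : D *m gram = - (gram *m D^T).
  apply: eq_bilinear_mx => u v; rewrite !mulmxA -polar_gram skD polar_gram.
  by rewrite mulmxN mulNmx [in RHS]mxE trmx_mul !mulmxA.
have := congr1 determinant eD; rewrite -scaleN1r detZ -signr_odd oddn expr1.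
rewrite !det_mulmx det_tr mulN1r mulrC => /eqP; rewrite -subr_eq0 opprK.
rewrite -mulr2n -mulr_natr mulf_eq0 (negPf two) orbF mulf_eq0.
have := gram_unit; rewrite unitmxE unitfE => /negPf -> /= /eqP d0.
by rewrite unitmxE d0 unitr0.
Qed.

End QuadraticForm.

Section Frames.
Variables (F : fieldType) (n : nat) (Q : 'rV[F]_n -> F).
Variables (gT : finGroupType) (G : {set gT}) (rep : gT -> 'M[F]_n).

Definition orth_frame (I : finType) (v : I -> 'rV[F]_n) :=
  [/\ forall i, polar Q (v i) (v i) != 0,
      forall i j, i != j -> polar Q (v i) (v j) = 0
    & forall g, g \in G -> forall i, exists j, exists c : F, v i *m rep g = c *: v j].

Definition has_orth_frame := exists v : 'I_n -> 'rV[F]_n, orth_frame v.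

Lemma orth_frame_reindex (I : finType) (v : I -> 'rV[F]_n) :
  #|I| = n -> orth_frame v -> has_orth_frame.
Proof.
move=> cardI [anv orv pmv].
pose e (i : 'I_n) : I := enum_val (cast_ord (esym cardI) i).
pose e' (j : I) : 'I_n := cast_ord cardI (enum_rank j).
have e'K j : e (e' j) = j by rewrite /e /e' cast_ordK enum_rankK.
exists (fun i => v (e i)); split => //.
- move=> i j nij; apply: orv.
  by apply: contra nij => /eqP/enum_val_inj/cast_ord_inj ->.
- by move=> g Gg i; have [j [c vg]] := pmv g Gg (e i); exists (e' j), c; rewrite e'K.
Qed.

End Frames.

Section Representation.
Variables (F : fieldType) (gT : finGroupType) (M : {group gT}) (n : nat).
Variable rM : mx_representation F M n.
Local Notation E_M := (enveloping_algebra_mx rM).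

Lemma mx_iso_centgmx (S1 S2 : 'M_n) :
  mx_completely_reducible rM 1%:M -> mxmodule rM S1 -> mx_iso rM S1 S2 ->
  exists2 f, centgmx rM f & (S1 *m f :=: S2)%MS.
Proof.
move=> redV modS1 [f0 _ homf0 defS2].
have [C modC defV dxS1C] := redV S1 modS1 (submx1 S1).
have dS1C := mxdirect_addsP dxS1C.
have cP : centgmx rM (proj_mx S1 C).
  by rewrite -row_full_dom_hom -sub1mx -defV proj_mx_hom.
have homP : (proj_mx S1 C <= dom_hom_mx rM f0)%MS.
  by apply: submx_trans homf0; rewrite -[proj_mx _ _]mul1mx proj_mx_sub.
exists (proj_mx S1 C *m f0); last by rewrite mulmxA proj_mx_id.
apply/centgmxP => x Mx.
by rewrite mulmxA -(centgmxP cP x Mx) (hom_mxP homP x Mx).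
Qed.

Lemma envelop_centgmx A : {in M &, forall x y, rM x *m rM y = rM y *m rM x} ->
  (A \in E_M)%MS -> centgmx rM A.
Proof.
move=> cM /envelop_mxP[a ->]; apply/centgmxP => y My.
rewrite mulmx_suml mulmx_sumr; apply: eq_bigr => x Mx.
by rewrite -scalemxAl -scalemxAr cM.
Qed.

Lemma homogeneous_singular_eq0 (sM : socleType rM) (P : 'M_n) :
  #|sM| = 1%N -> mx_completely_reducible rM 1%:M ->
  centgmx rM P -> (P \in E_M)%MS -> P \notin unitmx -> P = 0.
Proof.
move=> sM1 redV cP EP uP.
have nzK : kermx P != 0 by rewrite kermx_eq0 row_free_unit.
have [S simS sSK] := classically_elim (mxsimple_exists (kermx_centg_module cP) nzK).
have fullS : (1%:M <= component_mx rM S)%MS.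
  have [W defW] := mem_card1 sM1.
  have eqW W1 : W1 = W by apply/eqP; have := defW W1; rewrite !inE.
  rewrite -(reducible_Socle1 sM redV); apply/sumsmx_subP => W1 _.
  by rewrite (eqW W1) -(eqW (PackSocle (component_socle sM simS))) PackSocleK.
have [I [Wi isoSW defS]] := component_mx_def simS.
suff : (1%:M <= kermx P)%MS by move/sub_kermxP; rewrite mul1mx.
apply: submx_trans fullS _; rewrite defS; apply/sumsmx_subP => i _.
have [f _ homf <-] := isoSW i.
by rewrite sub_kermx -(hom_envelop_mxC homf EP) (sub_kermxP sSK) mul0mx.
Qed.

End Representation.

Section IsometricRepresentation.
Variables (F : fieldType) (gT : finGroupType) (M : {group gT}) (n : nat).
Variables (rM : mx_representation F M n) (Q : 'rV[F]_n -> F).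
Hypotheses (qfQ : is_quadform Q) (ndQ : qf_nondegenerate Q).
Hypothesis isoM : forall x, x \in M -> qf_isometry Q (rM x).
Hypothesis redV : mx_completely_reducible rM 1%:M.
Variable sM : socleType rM.
Local Notation perp := (perp Q).

Lemma perp_module (U : 'M_n) : mxmodule rM U -> mxmodule rM (perp U).
Proof.
move=> modU; apply/mxmoduleP => x Mx.
have sUUx : (U <= U *m rM x)%MS.
  rewrite -{1}(repr_mxKV rM Mx U) submxMr //.
  by apply: (mxmoduleP modU); rewrite groupV.
rewrite (sub_perpC qfQ); apply: submx_trans sUUx _.
by rewrite (perp_isometry qfQ (isoM Mx)) (sub_perpC qfQ (perp U)).
Qed.

Lemma centgmx_adj A : centgmx rM A -> centgmx rM (adj Q A).
Proof.
move/centgmxP => cA; apply/centgmxP => x Mx.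
by rewrite (adj_comm_isometry qfQ ndQ (isoM Mx) (repr_mx_unit rM Mx) (cA x Mx)).
Qed.

Lemma perp_component (W W1 : sM) (S : 'M_n) : mxsimple rM S ->
  (S <= W1)%MS -> (S <= perp W)%MS -> (W1 <= perp W)%MS.
Proof.
move=> simS sSW1 sSW; have simW1 := socle_simple W1.
have /(component_mx_isoP simW1 simS)/eqP defW1 := component_mx_iso simW1 simS sSW1.
rewrite /socle_val defW1; have [I [Wi isoSW ->]] := component_mx_def simS.
(* Each Wi is the image of S under an M-endomorphism of V, whose adjoint
   preserves W. *)
apply/sumsmx_subP => i _.
have [f cf <-] := mx_iso_centgmx redV (mxsimple_module simS) (isoSW i).
rewrite (sub_perpC qfQ) (sub_perp_adj qfQ ndQ) -(sub_perpC qfQ).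
apply: submx_trans sSW (perpS qfQ _).
apply: (hom_component_mx (socle_simple W)); apply: centgmx_hom.
exact: centgmx_adj.
Qed.

Lemma component_meet_perp (W W1 : sM) :
  ~~ (W1 <= perp W)%MS -> (W1 :&: perp W = 0)%MS.
Proof.
move=> nW1; apply/eqP; apply: contraNT nW1 => nzK.
have modK : mxmodule rM (W1 :&: perp W)%MS.
  by rewrite capmx_module ?perp_module ?component_mx_module.
have [S simS sSK] := classically_elim (mxsimple_exists modK nzK).
by apply: (perp_component simS); apply: submx_trans sSK _; rewrite ?capmxSl ?capmxSr.
Qed.

Lemma perp_componentE (W : sM) :
  (perp W :=: \sum_(W1 : sM | (W1 <= perp W)%MS) W1)%MS.
Proof.
apply/eqmxP/andP; split; last by apply/sumsmx_subP.
have modP := perp_module (component_mx_module rM (socle_base W)).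
have sPS : (perp W <= perp W :&: \sum_(W1 : sM | predT W1) W1)%MS.
  rewrite sub_capmx submx_refl /=.
  by have := reducible_Socle1 sM redV; rewrite /Socle => ->; apply: submx1.
rewrite (submx_trans sPS) // capmx_subSocle //.
apply/sumsmx_subP => W1 _; have [sW1 | nW1] := boolP (W1 <= perp W)%MS.
  exact: submx_trans (capmxSr _ _) (sumsmx_sup W1 _ _).
by rewrite capmxC component_meet_perp ?sub0mx.
Qed.

End IsometricRepresentation.

Section Clifford.
Variables (F : fieldType) (gT : finGroupType) (G M : {group gT}) (n : nat).
Hypothesis nsMG : (M <| G)%g.
Variables (rG : mx_representation F G n) (Q : 'rV[F]_n -> F).
Hypotheses (qfQ : is_quadform Q) (ndQ : qf_nondegenerate Q).
Hypothesis irrG : mx_irreducible rG.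
Hypothesis isoG : forall g, g \in G -> qf_isometry Q (rG g).
Let sMG := normal_sub nsMG.
Local Notation rM := (subg_repr rG sMG).
Variable sH : socleType rM.
Local Notation perp := (perp Q).

Let isoM x : x \in M -> qf_isometry Q (rM x).
Proof. by move=> Mx; apply: isoG; apply: (subsetP sMG). Qed.

Lemma Clifford_reducible : mx_completely_reducible rM 1%:M.
Proof.
apply: mxsemisimple_reducible; rewrite -(Clifford_Socle1 irrG sH).
exact: Socle_semisimple.
Qed.

Lemma component_transitive (W0 W : sH) : exists2 g, g \in G & (W :=: W0 *m rG g)%MS.
Proof.
have : W \in orbit (Clifford_action sH) G W0.
  by rewrite (atransPin (subxx _) (Clifford_atrans irrG sH)) ?inE.
by case/orbitP => g Gg <-; exists g => //; apply: val_Clifford_act.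
Qed.

Lemma mxrank_component (W W1 : sH) : \rank W1 = \rank W.
Proof.
have t0 : (0 < #|sH|)%N by apply/card_gt0P; exists W.
apply/eqP; rewrite -(eqn_pmul2l t0).
by rewrite !(Clifford_rank_components irrG).
Qed.

Lemma card_nonorth_component (W : sH) :
  #|[pred W1 : sH | ~~ (W1 <= perp W)%MS]| = 1%N.
Proof.
pose A := [pred W1 : sH | (W1 <= perp W)%MS].
have rW := Clifford_rank_components irrG W.
have r0 : (0 < \rank W)%N by rewrite lt0n mxrank_eq0 nz_socle.
have rP : (#|A| * \rank W = (#|sH| - 1) * \rank W)%N.
  rewrite mulnBl mul1n rW -(mxrank_perp qfQ ndQ).
  rewrite (perp_componentE qfQ ndQ isoM Clifford_reducible).
  rewrite (mxdirectP (subSocle_direct _)) /= -sum_nat_const.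
  by apply: eq_big => // W1 _; apply: esym (mxrank_component W W1).
have -> : #|[pred W1 : sH | ~~ (W1 <= perp W)%MS]| = #|[predC A]|.
  by apply: eq_card => W1; rewrite !inE.
have cardA : (#|A| + #|[predC A]| = #|sH|)%N := cardC A.
have t0 : (0 < #|sH|)%N by apply/card_gt0P; exists W.
by move: rP => /eqP; rewrite eqn_pmul2r // => /eqP; lia.
Qed.

Hypothesis oddn : odd n.

Lemma component_orth (W W1 : sH) : W != W1 -> (W1 <= perp W)%MS.
Proof.
pose sg (W : sH) := odflt W [pick W1 : sH | ~~ (W1 <= perp W)%MS].
have sgP (W' : sH) : ~~ (sg W' <= perp W')%MS.
  rewrite /sg; case: pickP => [W1' -> // | none].
  have none' : [pred W1 : sH | ~~ (W1 <= perp W')%MS] =i pred0 by apply: none.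
  by have := card_nonorth_component W'; rewrite (eq_card0 none').
have sgU (W' W1' : sH) : ~~ (W1' <= perp W')%MS -> W1' = sg W'.
  move=> nW1'; have [W2 defW2] := mem_card1 (card_nonorth_component W').
  have := defW2 W1'; have := defW2 (sg W'); rewrite !inE /= sgP nW1'.
  by move=> /esym/eqP -> /esym/eqP ->.
have sgK : involutive sg.
  by move=> W'; apply/esym/sgU; rewrite (sub_perpC qfQ); apply: sgP.
have [W0 sgW0] : exists W0, sg W0 = W0.
  apply: involutive_fixpoint sgK _; have := Clifford_rank_components irrG W.
  by move/(congr1 odd); rewrite oddM oddn => /andP[].
have sg_id (W' : sH) : sg W' = W'.
  have [g Gg eW'] := component_transitive W0 W'.
  apply/esym/sgU; rewrite eW' (eqmx_perp qfQ eW') (perp_isometry qfQ (isoG Gg)).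
  by have := sgP W0; rewrite sgW0.
by move=> nWW1; apply: contraNT nWW1 => /sgU ->; rewrite sg_id.
Qed.

Hypothesis two : (2%:R : F) != 0.

Lemma homogeneous_abelian_sign a : a \in M -> #|sH| = 1%N ->
  {in M &, forall x y, rG x *m rG y = rG y *m rG x} ->
  rG a = 1%:M \/ rG a = - 1%:M.
Proof.
move=> Ma sH1 cM; have Ga := subsetP sMG a Ma; have uA := repr_mx_unit rG Ga.
pose E := enveloping_algebra_mx rM.
have EM x y (c : F) : x \in M -> y \in M -> (rG x + c *: rG y \in E)%MS.
  move=> Mx My; rewrite linearD linearZ /= addmx_sub ?scalemx_sub //.
  - exact: (envelop_mx_id rM Mx).
  - exact: (envelop_mx_id rM My).
have E1 (c : F) : (rG a + c *: 1%:M \in E)%MS by rewrite -(repr_mx1 rG) EM.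
have eq0 P : (P \in E)%MS -> P \notin unitmx -> P = 0.
  move=> EP; apply: (homogeneous_singular_eq0 sH1 Clifford_reducible _ EP).
  exact: (@envelop_centgmx _ _ _ _ rM _ cM EP).
have sqA : rG a *m rG a = 1%:M.
  suff /eqP : rG a - invmx (rG a) = 0 by rewrite subr_eq0 => /eqP {2}->; rewrite mulmxV.
  apply: eq0; first by rewrite -repr_mxV // -scaleN1r EM ?groupV.
  exact: skew_singular qfQ ndQ two oddn _ (isometry_skew qfQ (isoG Ga) uA).
have sq0 : (rG a - 1%:M) *m (rG a + 1%:M) = 0.
  by rewrite mulmxDr mulmxBl sqA mulmx1 mul1mx addrA subrK subrr.
have [u1 | /eq0 a1] := boolP (rG a - 1%:M \in unitmx).
  by right; apply/eqP; rewrite -subr_eq0 opprK -(mulKmx u1 (_ + _)) sq0 mulmx0.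
by left; apply/eqP; rewrite -subr_eq0 a1 // -scaleN1r E1.
Qed.

End Clifford.

Definition orth_frame_statement (F : fieldType) (n : nat) :=
  forall (gT : finGroupType) (G : {group gT}) (rG : mx_representation F G n)
    (Q : 'rV[F]_n -> F),
  (2%:R : F) != 0 -> odd n -> is_quadform Q -> qf_nondegenerate Q ->
  (forall g, g \in G -> qf_isometry Q (rG g)) -> solvable G -> mx_irreducible rG ->
  has_orth_frame Q G rG.

Section Imprimitive.
Variables (F : fieldType) (gT : finGroupType) (G M : {group gT}) (n : nat).
Hypothesis nsMG : (M <| G)%g.
Variables (rG : mx_representation F G n) (Q : 'rV[F]_n -> F).
Hypotheses (qfQ : is_quadform Q) (ndQ : qf_nondegenerate Q).
Hypothesis irrG : mx_irreducible rG.
Hypothesis isoG : forall g, g \in G -> qf_isometry Q (rG g).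
Hypothesis oddn : odd n.
Variables (sH : socleType (subg_repr rG (normal_sub nsMG))) (W0 : sH).
Local Notation H := (rstabs_group rG W0).
Let sHG : H \subset G := rstabs_sub rG W0.
Let modW0 : mxmodule (subg_repr rG sHG) W0 :=
  mxsimple_module (Clifford_rstabs_simple irrG W0).
Local Notation rW := (submod_repr modW0).
Local Notation QW := (qf_restrict Q (row_base W0)).

Lemma component_nondegenerate : qf_nondegenerate QW.
Proof.
apply: (qf_restrict_nondegenerate qfQ ndQ (row_base_free _)).
rewrite (adds_eqmx (eq_row_base _) (eqmx_perp qfQ (eq_row_base _))).
rewrite -(Clifford_Socle1 irrG sH); apply/sumsmx_subP => W _.
have [<- | nW0W] := eqVneq W0 W; first exact: addsmxSl.
exact: submx_trans (component_orth qfQ ndQ irrG isoG oddn nW0W) (addsmxSr _ _).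
Qed.

Lemma component_isometry h : h \in H -> qf_isometry QW (rW h).
Proof.
move=> Hh x; rewrite /qf_restrict /=.
by rewrite -[x *m _ *m _]/(val_submod _) (val_submodJ modW0) // isoG ?(subsetP sHG).
Qed.

Let x_ (W : sH) := odflt 1%g [pick g in G | (W == W0 *m rG g)%MS].

Let transversalP (W : sH) : x_ W \in G /\ (W :=: W0 *m rG (x_ W))%MS.
Proof.
rewrite /x_; case: pickP => [g /andP[Gg /eqmxP eW] | none] //=.
have [g Gg eW] := component_transitive irrG W0 W.
by move: (none g); rewrite Gg (introT eqmxP eW).
Qed.

Let transversal_stab (W : sH) g : g \in G ->
  (x_ W * g * (x_ (Clifford_action sH W g))^-1)%g \in H.
Proof.
move=> Gg; set W' := Clifford_action sH W g.
have [GxW eW] := transversalP W; have [GxW' eW'] := transversalP W'.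
rewrite inE !groupM ?groupV //= !repr_mxM ?groupM ?groupV // !mulmxA.
rewrite -[X in (_ <= X)%MS](repr_mxK rG GxW' W0) submxMr // -eW'.
by rewrite (val_Clifford_act _ Gg) submxMr // eW.
Qed.

Lemma induced_orth_frame : has_orth_frame QW H rW -> has_orth_frame Q G rG.
Proof.
move=> [v [anv orv pmv]].
pose u (p : sH * 'I_(\rank W0)) := v p.2 *m row_base W0 *m rG (x_ p.1).
have uW p : (u p <= p.1)%MS.
  have [_ eW] := transversalP p.1.
  by rewrite /u eW submxMr // (submx_trans (submxMl _ _)) ?eq_row_base.
have bu W k l : polar Q (u (W, k)) (u (W, l)) = polar QW (v k) (v l).
  by rewrite polar_restrict /u (polar_isometry (isoG (transversalP W).1)).
apply: (@orth_frame_reindex _ _ _ _ _ _ _ u).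
  by rewrite card_prod card_ord (Clifford_rank_components irrG W0).
split.
- by move=> [W k]; rewrite bu anv.
- move=> [W k] [W1 l]; have [<- neq | nWW1 _] := eqVneq W W1.
    by rewrite bu orv //; apply: contra neq => /eqP ->.
  move/rV_subP/(_ _ (uW (W1, l))): (component_orth qfQ ndQ irrG isoG oddn nWW1).
  by move/(perpP qfQ)/(_ _ (uW (W, k))); rewrite polarC.
move=> g Gg [W k]; set W' := Clifford_action sH W g.
have Hh := transversal_stab W Gg.
have [j [c vh]] := pmv _ Hh k; exists (W', j), c.
have Gh := subsetP sHG _ Hh; have [GxW _] := transversalP W.
have [GxW' _] := transversalP W'.
rewrite /u -mulmxA -repr_mxM // -[(x_ W * g)%g](mulgKV (x_ W')) repr_mxM ?groupM ?groupV //.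
rewrite mulmxA -[v k *m _]/(val_submod _) -(val_submodJ modW0) //.
by rewrite [_ *m submod_mx _ _]vh linearZ /= -scalemxAl.
Qed.

Hypotheses (two : (2%:R : F) != 0) (solG : solvable G).
Hypothesis IH : forall m, (m < n)%N -> orth_frame_statement F m.

Lemma imprimitive_orth_frame : (1 < #|sH|)%N -> has_orth_frame Q G rG.
Proof.
move=> sH_gt1; apply: induced_orth_frame.
have rW0 := Clifford_rank_components irrG W0.
have r0 : (0 < \rank W0)%N by rewrite lt0n mxrank_eq0 nz_socle.
have lt_rn : (\rank W0 < n)%N by rewrite -[X in (_ < X)%N]rW0 ltn_Pmull.
apply: (IH lt_rn) two _ (qf_restrictP qfQ _) component_nondegenerate
  component_isometry (solvableS sHG solG) _.
- have : odd (#|sH| * \rank W0) by rewrite rW0.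
  by rewrite oddM => /andP[].
- exact/(submod_mx_irr modW0).2/Clifford_rstabs_simple.
Qed.

End Imprimitive.

Lemma derived_last_outside (gT : finGroupType) (G : {group gT}) (Z : {set gT}) :
  solvable G -> 1%g \in Z -> ~~ (G \subset Z) ->
  exists m, ~~ ((G^`(m))%g \subset Z) /\ (G^`(m.+1))%g \subset Z.
Proof.
move=> solG Z1 nGZ.
have exP : exists k, [pred k | (G^`(k))%g \subset Z] k.
  by case/derivedP: solG => k dk; exists k; rewrite /= dk sub1set.
case: (ex_minnP exP) => -[|m] /= Pm minm; first by move: Pm; rewrite derg0 (negPf nGZ).
by exists m; split => //; apply/negP => /minm; rewrite ltnn.
Qed.

Lemma sign_commutator_commute (F : fieldType) (gT : finGroupType) (G : {group gT})
    n (rG : mx_representation F G n) x y :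
  (2%:R : F) != 0 -> odd n -> x \in G -> y \in G ->
  rG [~ x, y]%g = 1%:M \/ rG [~ x, y]%g = - 1%:M -> rG x *m rG y = rG y *m rG x.
Proof.
move=> two oddn Gx Gy; have uX := repr_mx_unit rG Gx; have uY := repr_mx_unit rG Gy.
have eC : invmx (rG y) *m rG x *m rG y = rG x *m rG [~ x, y]%g.
  rewrite commgEl conjgE !repr_mxM ?groupM ?groupV // !repr_mxV //.
  by rewrite mulmxA mulmxV // mul1mx !mulmxA.
case=> eR; rewrite eR ?mulmx1 ?mulmxN ?mulmx1 in eC; last first.
  by move/eqP: eC; rewrite (negPf (conj_neq_opp two oddn uX uY)).
by rewrite -{1}[rG x *m rG y](mulKVmx uY) (mulmxA (invmx (rG y))) eC.
Qed.

Lemma mx_irr_scalar_dim1 (F : fieldType) (gT : finGroupType) (G : {group gT})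
    n (rG : mx_representation F G n) :
  mx_irreducible rG -> (forall g, g \in G -> is_scalar_mx (rG g)) -> n = 1%N.
Proof.
case/mx_irrP => n_gt0 irrG scG; pose v : 'rV[F]_n := delta_mx 0 (Ordinal n_gt0).
have nzv : <<v>>%MS != 0.
  rewrite -mxrank_eq0 mxrank_gen mxrank_eq0; apply: contraNneq (oner_neq0 F).
  by move/matrixP/(_ 0 (Ordinal n_gt0)); rewrite !mxE !eqxx /= => /eqP.
have modv : mxmodule rG <<v>>%MS.
  rewrite (eqmx_module _ (genmxE v)); apply/mxmoduleP => g Gg.
  by have /is_scalar_mxP[a ->] := scG g Gg; rewrite mul_mx_scalar scalemx_sub.
have := rank_leq_row v; rewrite -mxrank_gen (eqP (irrG _ modv nzv)).
by move=> le_n1; apply/eqP; rewrite eqn_leq le_n1.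
Qed.

Lemma orth_frame_dim1 (F : fieldType) (Q : 'rV[F]_1 -> F) (gT : finGroupType)
    (G : {set gT}) (rep : gT -> 'M[F]_1) :
  is_quadform Q -> qf_nondegenerate Q -> has_orth_frame Q G rep.
Proof.
move=> qfQ ndQ; pose v : 'rV[F]_1 := 1%:M.
have scal (w : 'rV[F]_1) : w = w 0 0 *: v by rewrite {1}(mx11_scalar w) -scalemx1.
exists (fun _ => v); split => [_ | i j | g _ i].
- apply/eqP => bv0; have : v = 0.
    by apply: ndQ => w; rewrite [w]scal (polarZr qfQ) bv0 mulr0.
  by move/matrixP/(_ 0 0); rewrite !mxE /= => /eqP; rewrite oner_eq0.
- by rewrite !ord1 eqxx.
- by exists i, ((v *m rep g) 0 0); rewrite -scal.
Qed.

Lemma orth_frame_exists (F : fieldType) (n : nat) : orth_frame_statement F n.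
Proof.
elim/ltn_ind: n => n IH gT G rG Q two oddn qfQ ndQ isoG solG irrG.
pose Z := [set g in G | (rG g == 1%:M) || (rG g == - 1%:M)].
have [GZ | nGZ] := boolP (G \subset Z).
  have n1 : n = 1%N.
    apply: (mx_irr_scalar_dim1 irrG) => g Gg; have := subsetP GZ g Gg.
    by rewrite inE Gg => /orP[] /eqP ->; rewrite -?raddfN scalar_mx_is_scalar.
  by clear IH isoG irrG; subst n; apply: orth_frame_dim1.
have Z1 : 1%g \in Z by rewrite inE group1 repr_mx1 eqxx.
have [m [nMZ MZ]] := derived_last_outside solG Z1 nGZ.
have nsMG : ([group of G^`(m)] <| G)%g := der_normal m G.
have cM : {in G^`(m) &, forall x y, rG x *m rG y = rG y *m rG x}%g.
  move=> x y Mx My; have sMG := subsetP (normal_sub nsMG).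
  apply: sign_commutator_commute two oddn (sMG x Mx) (sMG y My) _.
  have : [~ x, y]%g \in Z by apply: (subsetP MZ); rewrite dergSn mem_commg.
  by rewrite inE => /andP[_ /orP[] /eqP]; [left | right].
have [a Ma nZa] := subsetPn nMZ.
have [sH] : inhabited (socleType (subg_repr rG (normal_sub nsMG))).
  apply: classically_elim => b hb.
  by apply: (socle_exists (subg_repr rG (normal_sub nsMG)) b) => sH; apply: hb.
have [W _ _] := imsetP (Clifford_atrans irrG sH).
have sH_gt0 : (0 < #|sH|)%N by apply/card_gt0P; exists W.
have [sH1 | sH_gt1] : #|sH| = 1%N \/ (1 < #|sH|)%N by lia.
  move: nZa; rewrite inE (subsetP (der_sub m G) a Ma) /=.
  by case: (homogeneous_abelian_sign qfQ ndQ irrG isoG oddn two Ma sH1 cM) => ->;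
    rewrite eqxx ?orbT.
exact: (imprimitive_orth_frame qfQ ndQ irrG isoG oddn W two solG IH sH_gt1).
Qed.

Lemma orth_frame_row_free (F : fieldType) n (Q : 'rV[F]_n -> F) m (v : 'I_m -> 'rV[F]_n) :
  is_quadform Q -> (forall i, polar Q (v i) (v i) != 0) ->
  (forall i j, i != j -> polar Q (v i) (v j) = 0) -> row_free (\matrix_i v i).
Proof.
move=> qfQ anv orv; rewrite -kermx_eq0; apply/eqP/row_matrixP => k; rewrite row0.
set w := row k _; have wV : w *m (\matrix_i v i) = 0 by apply/sub_kermxP; apply: row_sub.
apply/rowP => j; have := congr1 (fun z => polar Q z (v j)) wV.
rewrite (polar0l qfQ) mulmx_sum_row (polar_suml qfQ) (bigD1 j) //= big1 => [|i nij].
  rewrite addr0 rowK (polarZl qfQ) => /eqP; rewrite mulf_eq0 (negPf (anv j)) orbF.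
  by rewrite !mxE => /eqP.
by rewrite rowK (polarZl qfQ) orv ?mulr0.
Qed.

Lemma orth_frame_lines (F : fieldType) n (Q : 'rV[F]_n -> F) (gT : finGroupType)
    (G : {group gT}) (rG : mx_representation F G n) (v : 'I_n -> 'rV[F]_n) :
  is_quadform Q -> orth_frame Q G rG v ->
  [/\ forall i, \rank <<v i>>%MS = 1%N,
      (\sum_i <<v i>> :=: 1%:M)%MS,
      mxdirect (\sum_i <<v i>>%MS),
      forall i j, i != j -> forall u w : 'rV_n,
        (u <= <<v i>>)%MS -> (w <= <<v j>>)%MS -> polar Q u w = 0
    & forall g, g \in G -> forall i, exists j, (<<v i>> *m rG g :=: <<v j>>)%MS].
Proof.
move=> qfQ [anv orv pmv].
have nzv i : v i != 0 by apply: contraNneq (anv i) => ->; rewrite (polar0l qfQ).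
have rank_v i : \rank <<v i>>%MS = 1%N by rewrite mxrank_gen rank_rV nzv.
have line_v i (u : 'rV_n) : (u <= <<v i>>)%MS -> exists c, u = c *: v i.
  rewrite genmxE => /submxP[D ->]; exists (D 0 0).
  by rewrite {1}[D]mx11_scalar mul_scalar_mx.
have sumV : (\sum_i <<v i>> :=: 1%:M)%MS.
  apply/eqmxP; rewrite submx1 /=.
  have fullV : row_full (\matrix_i v i).
    by rewrite row_full_unit -row_free_unit (orth_frame_row_free qfQ anv orv).
  rewrite -sub1mx in fullV; apply: submx_trans fullV _.
  by apply/row_subP => i; rewrite rowK (sumsmx_sup i) // genmxE.
split => //.
- rewrite mxdirectE /= sumV mxrank1 (eq_bigr (fun _ => 1%N)) //.
  by rewrite sum_nat_const card_ord muln1.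
- move=> i j nij u w /line_v[a ->] /line_v[c ->].
  by rewrite (polarZl qfQ) (polarZr qfQ) orv ?mulr0.
- move=> g Gg i; have [j [c vg]] := pmv g Gg i; exists j.
  have nzc : c != 0.
    apply: contraNneq (nzv i) => c0; move: vg; rewrite c0 scale0r => vg.
    by rewrite -(repr_mxK rG Gg (v i)) vg mul0mx.
  apply: eqmx_trans (eqmxMr _ (genmxE _)) _; rewrite vg.
  exact: eqmx_trans (eqmx_scale _ nzc) (eqmx_sym (genmxE _)).
Qed.

Theorem theorem1p1 (F : fieldType) (n : nat) (Q : 'rV[F]_n -> F)
    (gT : finGroupType) (G : {group gT}) (rG : mx_representation F G n) :
  (2%:R : F) != 0 ->
  odd n ->
  is_quadform Q ->
  qf_nondegenerate Q ->
  mx_faithful rG ->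
  (forall g, g \in G -> forall v, Q (v *m rG g) = Q v) ->
  solvable G ->
  mx_irreducible rG ->
  exists W : 'I_n -> 'M[F]_n,
    [/\ (forall i, \rank (W i) = 1%N),
        (\sum_i W i :=: 1%:M)%MS,
        mxdirect (\sum_i W i),
        (forall i j, i != j -> forall u v : 'rV[F]_n,
            (u <= W i)%MS -> (v <= W j)%MS -> polar Q u v = 0)
      & (forall g, g \in G -> forall i, exists j, (W i *m rG g :=: W j)%MS)].
Proof.
move=> two oddn qfQ ndQ _ isoG solG irrG.
have [v frame_v] := orth_frame_exists two oddn qfQ ndQ isoG solG irrG.
by exists (fun i => <<v i>>%MS); apply: orth_frame_lines.
Qed.
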